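(* If $\Phi$ is a set of modal formulas such that $\mathbf{K}+\Phi=\mathrm{Log}_{>1}(\mathbb{R})$, then infinitely many distinct propositional variables occur in the formulas of $\Phi$. Consequently, $\mathrm{Log}_{>1}(\mathbb{R})$ is not finitely axiomatizable.
   Context: Modal formulas are built from a countable set of propositional variables using $\bot$, $\to$ and one unary modality $\lozenge$. $\mathrm{Log}_{>1}(\mathbb{R})$ is the set of formulas valid (true at every point under every valuation) in the frame $(\mathbb{R},R_{>1})$, where $xR_{>1}y$ iff $|x-y|>1$ and $x\models\lozenge\varphi$ iff some $y$ with $xR_{>1}y$ satisfies $\varphi$. A normal modal logic is a set of formulas containing all classical tautologies, $\neg\lozenge\bot$ and $\lozenge(p\vee q)\to\lozenge p\vee\lozenge q$, closed under modus ponens, uniform substitution, and the rule: from $\varphi\to\psi$ infer $\lozenge\varphi\to\lozenge\psi$. $\mathbf{K}+\Phi$ is the smallest normal modal logic containing $\Phi$. A logic is finitely axiomatizable if it equals $\mathbf{K}+\Phi$ for some finite $\Phi$. *)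

From Stdlib Require Import Reals List.
Open Scope R_scope.

Inductive form : Type :=
| Var : nat -> form
| Bot : form
| Imp : form -> form -> form
| Dia : form -> form.

Definition Neg (a : form) : form := Imp a Bot.
Definition Or (a b : form) : form := Imp (Neg a) b.

Fixpoint occurs (n : nat) (f : form) : Prop :=
  match f with
  | Var m => m = n
  | Bot => False
  | Imp a b => occurs n a \/ occurs n b
  | Dia a => occurs n a
  end.

Fixpoint subst (s : nat -> form) (f : form) : form :=
  match f with
  | Var m => s m
  | Bot => Bot
  | Imp a b => Imp (subst s a) (subst s b)
  | Dia a => Dia (subst s a)
  end.

(* Classical (boolean) evaluation, treating formulas Dia a as atoms. *)
Fixpoint beval (v : nat -> bool) (d : form -> bool) (f : form) : bool :=
  match f with
  | Var m => v m
  | Bot => false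
  | Imp a b => orb (negb (beval v d a)) (beval v d b)
  | Dia a => d a
  end.

Definition tautology (f : form) : Prop :=
  forall v d, beval v d f = true.

Inductive KPlus (Phi : form -> Prop) : form -> Prop :=
| KP_ax : forall f, Phi f -> KPlus Phi f
| KP_taut : forall f, tautology f -> KPlus Phi f
| KP_diabot : KPlus Phi (Neg (Dia Bot))
| KP_K : KPlus Phi (Imp (Dia (Or (Var 0) (Var 1))) (Or (Dia (Var 0)) (Dia (Var 1))))
| KP_mp : forall f g, KPlus Phi (Imp f g) -> KPlus Phi f -> KPlus Phi g
| KP_subst : forall s f, KPlus Phi f -> KPlus Phi (subst s f)
| KP_mono : forall f g, KPlus Phi (Imp f g) -> KPlus Phi (Imp (Dia f) (Dia g)).

Definition Rgt1 (x y : R) : Prop := Rabs (x - y) > 1.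

Fixpoint sat (V : nat -> R -> Prop) (x : R) (f : form) : Prop :=
  match f with
  | Var m => V m x
  | Bot => False
  | Imp a b => sat V x a -> sat V x b
  | Dia a => exists y, Rgt1 x y /\ sat V y a
  end.

Definition LogR (f : form) : Prop := forall V x, sat V x f.

Definition infinitely_many_vars (Phi : form -> Prop) : Prop :=
  ~ exists N : nat, forall n, (exists f, Phi f /\ occurs n f) -> (n < N)%nat.

Definition finitely_axiomatizable (L : form -> Prop) : Prop :=
  exists l : list form, forall f, KPlus (fun g => In g l) f <-> L f.

From Stdlib Require Import Reals List Lra Lia Classical ClassicalEpsilon.
Open Scope R_scope.

(* Let k = 2^N + 1 and let F_k be the frame of k points in which every point
   sees every other point.  Every formula in the variables p_0, ..., p_{N-1}
   that is valid on R is valid on F_k: for a valuation on F_k two distinct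
   points a, b agree on all N variables, and R maps bisimilarly onto F_k by
   sending the interval [3w, 3w+1] to w for w <> a, b and every other real to
   both a and b.  Hence if Phi only uses N variables, K + Phi is contained in
   the logic of F_k.  But the formula
     [][](p_0 \/ ... \/ p_{k-1}) -> ~ /\_i [][](p_i -> ~ <> p_i)
   is valid on R, by pigeonhole on the k + 1 reals 0, 2, ..., 2k, and fails on
   F_k when p_i holds exactly at the point i. *)

Fixpoint ksat {W : Type} (Rel : W -> W -> Prop) (V : nat -> W -> Prop)
    (w : W) (f : form) : Prop :=
  match f with
  | Var m => V m w
  | Bot => False
  | Imp a b => ksat Rel V w a -> ksat Rel V w b
  | Dia a => exists w', Rel w w' /\ ksat Rel V w' a
  end.

Definition valid_on {W : Type} (Rel : W -> W -> Prop) (D : W -> Prop)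
    (f : form) : Prop :=
  forall V w, D w -> ksat Rel V w f.

Definition vars_below (N : nat) (f : form) : Prop :=
  forall n, occurs n f -> (n < N)%nat.

Definition bdec (P : Prop) : bool :=
  if excluded_middle_informative P then true else false.

Lemma bdec_reflect (P : Prop) : reflect P (bdec P).
Proof. unfold bdec; destruct (excluded_middle_informative P); constructor; auto. Qed.

Lemma bdec_iff (P Q : Prop) : bdec P = bdec Q -> (P <-> Q).
Proof. destruct (bdec_reflect P), (bdec_reflect Q); intuition congruence. Qed.

Lemma sat_ksat V x f : sat V x f <-> ksat Rgt1 V x f.
Proof.
  revert x; induction f as [n| |f1 IH1 f2 IH2|f IH]; intros x; simpl; try tauto.
  - rewrite IH1, IH2; tauto.
  - split; intros [y [Hxy Hy]]; exists y; split; auto; apply IH; auto.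
Qed.

Definition Box (f : form) : form := Neg (Dia (Neg f)).
Definition Box2 (f : form) : form := Box (Box f).

Fixpoint Disj (n : nat) : form :=
  match n with 0 => Bot | S m => Or (Disj m) (Var m) end.

Definition isolated (i : nat) : form := Imp (Var i) (Neg (Dia (Var i))).

Fixpoint not_all_isolated (n : nat) : form :=
  match n with
  | 0 => Bot
  | S m => Imp (Box2 (isolated m)) (not_all_isolated m)
  end.

Definition theta (n : nat) : form := Imp (Box2 (Disj n)) (not_all_isolated n).

Section Kripke.

Context {W : Type} (Rel : W -> W -> Prop).

Lemma ksat_subst s f V w :
  ksat Rel V w (subst s f) <-> ksat Rel (fun n u => ksat Rel V u (s n)) w f.
Proof.
  revert w; induction f as [n| |f1 IH1 f2 IH2|f IH]; intros w; simpl; try tauto.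
  - rewrite IH1, IH2; tauto.
  - split; intros [y [Hwy Hy]]; exists y; split; auto; apply IH; auto.
Qed.

Lemma ksat_beval V w f :
  reflect (ksat Rel V w f)
    (beval (fun n => bdec (V n w)) (fun a => bdec (ksat Rel V w (Dia a))) f).
Proof.
  induction f as [n| |f1 IH1 f2 IH2|f IH]; cbn [beval].
  - apply bdec_reflect.
  - constructor; tauto.
  - destruct IH1, IH2; simpl; constructor; tauto.
  - apply bdec_reflect.
Qed.

Lemma tautology_ksat f V w : tautology f -> ksat Rel V w f.
Proof.
  intros Hf.
  generalize (Hf (fun n => bdec (V n w)) (fun a => bdec (ksat Rel V w (Dia a)))).
  destruct (ksat_beval V w f); [auto | discriminate].
Qed.

Lemma KPlus_sound_on (D : W -> Prop) (Phi : form -> Prop) :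
  (forall u v, D u -> Rel u v -> D v) ->
  (forall f, Phi f -> valid_on Rel D f) ->
  forall f, KPlus Phi f -> valid_on Rel D f.
Proof.
  intros HD HPhi f Hf; induction Hf as [f Hf|f Hf| | |f g _ IHfg _ IHf|s f _ IHf
    |f g _ IHfg]; intros V w Hw.
  - exact (HPhi f Hf V w Hw).
  - apply tautology_ksat, Hf.
  - simpl; intros [y [_ []]].
  - simpl; intros [y [Hwy Hy]] Hnot.
    exists y; split; auto; apply Hy; intros H0; apply Hnot; eauto.
  - exact (IHfg V w Hw (IHf V w Hw)).
  - apply ksat_subst, IHf, Hw.
  - simpl; intros [y [Hwy Hy]].
    exists y; split; auto; exact (IHfg V y (HD w y Hw Hwy) Hy).
Qed.

Lemma ksat_Disj V z n : ksat Rel V z (Disj n) <-> exists i, (i < n)%nat /\ V i z.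
Proof.
  induction n as [|n IH]; simpl.
  - split; [tauto | intros [i [Hi _]]; lia].
  - rewrite IH; split.
    + intros H; destruct (classic (exists i, (i < n)%nat /\ V i z)) as [[i [Hi Hv]]|Hno].
      * exists i; split; [lia | exact Hv].
      * exists n; split; [lia | exact (H Hno)].
    + intros [i [Hi Hv]] Hno; destruct (Nat.eq_dec i n) as [-> | Hin]; [exact Hv|].
      exfalso; apply Hno; exists i; split; [lia | exact Hv].
Qed.

Lemma ksat_not_all_isolated V z n :
  ksat Rel V z (not_all_isolated n) <->
  ~ (forall i, (i < n)%nat -> ksat Rel V z (Box2 (isolated i))).
Proof.
  induction n as [|n IH]; cbn [not_all_isolated ksat].
  - split; [tauto | intros H; apply H; intros; lia].
  - rewrite IH; split.
    + intros H Hall; apply (H (Hall n (Nat.lt_succ_diag_r n))).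
      intros i Hi; apply Hall; lia.
    + intros H Hn Hall; apply H; intros i Hi.
      destruct (Nat.eq_dec i n) as [-> | Hin]; [exact Hn | apply Hall; lia].
Qed.

End Kripke.

Section Bisimulation.

Variables (W1 W2 : Type) (R1 : W1 -> W1 -> Prop) (R2 : W2 -> W2 -> Prop)
  (V1 : nat -> W1 -> Prop) (V2 : nat -> W2 -> Prop) (Z : W1 -> W2 -> Prop)
  (N : nat).

Hypotheses
  (Z_atoms : forall n x w, (n < N)%nat -> Z x w -> (V1 n x <-> V2 n w))
  (Z_forth : forall x w x', Z x w -> R1 x x' -> exists w', R2 w w' /\ Z x' w')
  (Z_back : forall x w w', Z x w -> R2 w w' -> exists x', R1 x x' /\ Z x' w').

Lemma ksat_bisim f :
  vars_below N f -> forall x w, Z x w -> (ksat R1 V1 x f <-> ksat R2 V2 w f).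
Proof.
  induction f as [n| |f1 IH1 f2 IH2|f IH]; intros Hf x w Hxw; simpl.
  - apply Z_atoms; [apply Hf; reflexivity | exact Hxw].
  - tauto.
  - rewrite (IH1 (fun n H => Hf n (or_introl H)) x w Hxw).
    rewrite (IH2 (fun n H => Hf n (or_intror H)) x w Hxw); tauto.
  - split.
    + intros [x' [Hxx' Hx']]; destruct (Z_forth x w x' Hxw Hxx') as [w' [Hww' Hz]].
      exists w'; split; [exact Hww' | apply (IH Hf x' w' Hz), Hx'].
    + intros [w' [Hww' Hw']]; destruct (Z_back x w w' Hxw Hww') as [x' [Hxx' Hz]].
      exists x'; split; [exact Hxx' | apply (IH Hf x' w' Hz), Hw'].
Qed.

End Bisimulation.

Lemma pigeonhole {A B : Type} (f : A -> B) (l : list A) (m : list B) :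
  NoDup l -> incl (map f l) m -> (length m < length l)%nat ->
  exists x y, In x l /\ In y l /\ x <> y /\ f x = f y.
Proof.
  intros Hl Hm Hlen; apply NNPP; intros Hno.
  assert (Hinj : NoDup (map f l)).
  { apply NoDup_map_NoDup_ForallPairs; [|exact Hl].
    intros x y Hx Hy Hxy; apply NNPP; intros Hne; apply Hno; exists x, y; auto. }
  pose proof (NoDup_incl_length Hinj Hm) as Hle; rewrite length_map in Hle; lia.
Qed.

Fixpoint bool_lists (N : nat) : list (list bool) :=
  match N with
  | 0 => nil :: nil
  | S N => map (cons true) (bool_lists N) ++ map (cons false) (bool_lists N)
  end.

Lemma length_bool_lists N : length (bool_lists N) = (2 ^ N)%nat.
Proof.
  induction N as [|N IH]; simpl; [reflexivity|].
  rewrite length_app, !length_map, IH; lia.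
Qed.

Lemma in_bool_lists (c : list bool) N : length c = N -> In c (bool_lists N).
Proof.
  intros <-; induction c as [|[|] c IH]; simpl; [now left| |];
    apply in_app_iff; [left | right]; apply in_map, IH.
Qed.

Lemma valuation_pigeonhole N k (V : nat -> nat -> Prop) :
  (2 ^ N < k)%nat ->
  exists a b, (a < k)%nat /\ (b < k)%nat /\ a <> b /\
    forall n, (n < N)%nat -> (V n a <-> V n b).
Proof.
  intros Hk.
  destruct (pigeonhole (fun w => map (fun n => bdec (V n w)) (seq 0 N))
              (seq 0 k) (bool_lists N)) as [a [b [Ha [Hb [Hab Hcol]]]]].
  - apply seq_NoDup.
  - intros c Hc; apply in_map_iff in Hc as [w [<- _]].
    apply in_bool_lists; rewrite length_map, length_seq; reflexivity.
  - rewrite length_bool_lists, length_seq; exact Hk.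
  - apply in_seq in Ha, Hb; exists a, b.
    split; [lia|]; split; [lia|]; split; [exact Hab|].
    intros n Hn; apply bdec_iff, (proj1 map_ext_in_iff Hcol), in_seq; lia.
Qed.

Lemma Rgt1_iff x y : Rgt1 x y <-> 1 < y - x \/ 1 < x - y.
Proof. unfold Rgt1, Rabs; destruct (Rcase_abs (x - y)); split; lra. Qed.

Lemma INR_apart i j : i <> j -> 1 <= INR j - INR i \/ 1 <= INR i - INR j.
Proof.
  intros Hij; destruct (Nat.lt_total i j) as [H|[H|H]]; [left | contradiction | right];
    apply le_INR in H; rewrite S_INR in H; lra.
Qed.

Lemma Rgt1_Box2 V x f : ksat Rgt1 V x (Box2 f) -> forall z, ksat Rgt1 V z f.
Proof.
  intros H z; apply NNPP; intros Hz; apply H.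
  pose proof (Rabs_pos x); pose proof (Rabs_pos z);
    pose proof (RRle_abs x); pose proof (RRle_abs z).
  exists (Rabs x + Rabs z + 2); split; [apply Rgt1_iff; lra|].
  intros Hbox; apply Hbox; exists z; split; [apply Rgt1_iff; lra | exact Hz].
Qed.

Lemma theta_valid n : LogR (theta n).
Proof.
  intros V x; apply sat_ksat; unfold theta; cbn [ksat]; intros Hcover.
  apply ksat_not_all_isolated; intros Hiso.
  destruct (choice (fun j i => (i < n)%nat /\ V i (2 * INR j))) as [c Hc].
  { intros j; apply (ksat_Disj Rgt1), (Rgt1_Box2 _ _ _ Hcover). }
  destruct (pigeonhole c (seq 0 (S n)) (seq 0 n)) as [j1 [j2 [_ [_ [Hne Hc12]]]]].
  - apply seq_NoDup.
  - intros i Hi; apply in_map_iff in Hi as [j [<- _]]; apply in_seq.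
    destruct (Hc j); lia.
  - rewrite !length_seq; lia.
  - destruct (Hc j1) as [Hi H1], (Hc j2) as [_ H2]; rewrite <- Hc12 in H2.
    apply (Rgt1_Box2 _ _ _ (Hiso (c j1) Hi) (2 * INR j1) H1).
    exists (2 * INR j2); split; [|exact H2].
    apply Rgt1_iff; destruct (INR_apart j1 j2 Hne); lra.
Qed.

(* The frame of k points each seeing all the others, carried by {0, ..., k-1}
   inside nat: its logic is [valid_on (diff_rel k) (fun w => w < k)]. *)
Definition diff_rel (k u v : nat) : Prop := u <> v /\ (v < k)%nat.

Lemma diff_Box2 k V x f :
  (forall w, (w < k)%nat -> ksat (diff_rel k) V w f) ->
  ksat (diff_rel k) V x (Box2 f).
Proof.
  intros H; simpl; intros [y [_ Hy]]; apply Hy.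
  intros [z [[_ Hz] Hnot]]; exact (Hnot (H z Hz)).
Qed.

Lemma theta_refuted k x : ~ ksat (diff_rel k) (fun i w => w = i) x (theta k).
Proof.
  unfold theta; cbn [ksat]; intros H.
  apply (ksat_not_all_isolated (diff_rel k)) in H.
  - apply H; intros i Hi; apply diff_Box2; intros w _; simpl.
    intros Hwi [v [[Hwv _] Hvi]]; congruence.
  - apply diff_Box2; intros w Hw; apply (ksat_Disj (diff_rel k)); exists w; auto.
Qed.

Section DiffFrameModel.

Variables (N k a b : nat) (V : nat -> nat -> Prop).

Hypotheses (Ha : (a < k)%nat) (Hb : (b < k)%nat) (Hab : a <> b)
  (Hagree : forall n, (n < N)%nat -> (V n a <-> V n b)).

(* The reals in [3u, 3u+1] are tracked by the point u when u <> a, b; all other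
   reals are tracked by both a and b. *)
Definition owner (x : R) (u : nat) : Prop :=
  (u < k)%nat /\ u <> a /\ u <> b /\ 3 * INR u <= x <= 3 * INR u + 1.

Definition tracks (x : R) (w : nat) : Prop :=
  owner x w \/ ((w = a \/ w = b) /\ forall u, ~ owner x u).

Definition V_R (n : nat) (x : R) : Prop := exists w, tracks x w /\ V n w.

Lemma owner_intro x u :
  (u < k)%nat -> ~ (u = a \/ u = b) -> 3 * INR u <= x <= 3 * INR u + 1 -> owner x u.
Proof. intros Hu Hab' Hx; split; [exact Hu|]; split; [|split]; auto; intros ->; auto. Qed.

Lemma owner_unique x u u' : owner x u -> owner x u' -> u = u'.
Proof.
  intros (_ & _ & _ & Hu) (_ & _ & _ & Hu'); apply NNPP; intros Hne.
  destruct (INR_apart u u' Hne); lra.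
Qed.

Lemma tracks_lt x w : tracks x w -> (w < k)%nat.
Proof. intros [[Hw _] | [[-> | ->] _]]; assumption. Qed.

Lemma tracks_total x : exists w, tracks x w.
Proof.
  destruct (classic (exists u, owner x u)) as [[u Hu] | Hno].
  - exists u; left; exact Hu.
  - exists a; right; split; [left; reflexivity|].
    intros u Hu; apply Hno; exists u; exact Hu.
Qed.

Lemma tracks_negative x w : x < 0 -> (w = a \/ w = b) -> tracks x w.
Proof.
  intros Hx Hw; right; split; [exact Hw|].
  intros u (_ & _ & _ & Hu & _); pose proof (pos_INR u); lra.
Qed.

Lemma tracks_atoms n x w : (n < N)%nat -> tracks x w -> (V_R n x <-> V n w).
Proof.
  intros Hn Hxw; split; [intros [w' [Hxw' Hv]] | intros Hv; exists w; auto].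
  destruct Hxw as [Hown | [Hw Hfree]], Hxw' as [Hown' | [Hw' Hfree']].
  - rewrite (owner_unique x w w' Hown Hown'); exact Hv.
  - destruct (Hfree' w Hown).
  - destruct (Hfree w' Hown').
  - pose proof (Hagree n Hn); destruct Hw as [-> | ->], Hw' as [-> | ->]; tauto.
Qed.

Lemma tracks_forth x w x' :
  tracks x w -> Rgt1 x x' -> exists w', diff_rel k w w' /\ tracks x' w'.
Proof.
  intros Hxw Hxx'; destruct (tracks_total x') as [w0 Hw0].
  destruct (Nat.eq_dec w0 w) as [-> | Hne].
  2: exists w0; split; [split; [congruence | exact (tracks_lt x' w0 Hw0)] | exact Hw0].
  destruct Hxw as [Hown | [Hw _]].
  - exfalso; destruct Hw0 as [Hown' | [Hw _]].
    + destruct Hown as (_ & _ & _ & ?), Hown' as (_ & _ & _ & ?).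
      apply Rgt1_iff in Hxx'; lra.
    + destruct Hown as (_ & ? & ? & _); tauto.
  - assert (Hfree : forall u, ~ owner x' u).
    { destruct Hw0 as [(_ & ? & ? & _) | [_ Hfree]]; [tauto | exact Hfree]. }
    destruct (Nat.eq_dec w a) as [-> | Hwa]; [exists b | exists a].
    + split; [split; assumption | right; auto].
    + split; [split; [congruence | exact Ha] | right; auto].
Qed.

Lemma tracks_back x w w' :
  tracks x w -> diff_rel k w w' -> exists x', Rgt1 x x' /\ tracks x' w'.
Proof.
  intros Hxw [Hne Hw'].
  destruct (classic (w' = a \/ w' = b)) as [Hpair | Hpair].
  - pose proof (Rabs_pos x); pose proof (RRle_abs (- x)); rewrite Rabs_Ropp in *.
    exists (- Rabs x - 2); split; [apply Rgt1_iff; lra|].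
    apply tracks_negative; [lra | exact Hpair].
  - assert (Hown : forall y, 3 * INR w' <= y <= 3 * INR w' + 1 -> tracks y w').
    { intros y Hy; left; apply owner_intro; assumption. }
    assert (Hx : ~ (3 * INR w' <= x <= 3 * INR w' + 1)).
    { intros Hx; assert (Hx' : owner x w') by (apply owner_intro; assumption).
      destruct Hxw as [Hxw | [_ Hfree]];
        [exact (Hne (owner_unique x w w' Hxw Hx')) | exact (Hfree w' Hx')]. }
    destruct (Rlt_or_le x (3 * INR w')) as [Hlt | Hge].
    + exists (3 * INR w' + 1); split; [apply Rgt1_iff; lra | apply Hown; lra].
    + assert (3 * INR w' + 1 < x) by (apply Rnot_le_lt; intros ?; apply Hx; lra).
      exists (3 * INR w'); split; [apply Rgt1_iff; lra | apply Hown; lra].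
Qed.

Lemma LogR_valid_diff_frame f :
  LogR f -> vars_below N f -> forall w, (w < k)%nat -> ksat (diff_rel k) V w f.
Proof.
  intros Hf HN w Hw.
  assert (Hx : exists x, tracks x w).
  { destruct (classic (w = a \/ w = b)) as [Hpair | Hpair].
    - exists (-1); apply tracks_negative; [lra | exact Hpair].
    - exists (3 * INR w); left; apply owner_intro; [exact Hw | exact Hpair | lra]. }
  destruct Hx as [x Hx].
  apply (ksat_bisim R nat Rgt1 (diff_rel k) V_R V tracks N
           tracks_atoms tracks_forth tracks_back f HN x w Hx).
  apply sat_ksat, Hf.
Qed.

End DiffFrameModel.

Lemma LogR_valid_on_diff N k f :
  (2 ^ N < k)%nat -> LogR f -> vars_below N f ->
  valid_on (diff_rel k) (fun w => (w < k)%nat) f.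
Proof.
  intros Hk Hf HN V w Hw.
  destruct (valuation_pigeonhole N k V Hk) as (a & b & Ha & Hb & Hab & Hagree).
  exact (LogR_valid_diff_frame N k a b V Ha Hb Hab Hagree f Hf HN w Hw).
Qed.

Lemma form_vars_bounded f : exists N, vars_below N f.
Proof.
  induction f as [n| |f1 [N1 H1] f2 [N2 H2]|f [N H]].
  - exists (S n); intros m Hm; simpl in Hm; lia.
  - exists 0%nat; intros m [].
  - exists (N1 + N2)%nat; intros m [Hm | Hm]; [apply H1 in Hm | apply H2 in Hm]; lia.
  - exists N; exact H.
Qed.

Lemma list_vars_bounded (l : list form) :
  exists N, forall f n, In f l -> occurs n f -> (n < N)%nat.
Proof.
  induction l as [|f l [N2 H2]]; [exists 0%nat; intros f n []|].
  destruct (form_vars_bounded f) as [N1 H1]; exists (N1 + N2)%nat.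
  intros g n [<- | Hg] Hn; [apply H1 in Hn | apply (H2 g n Hg) in Hn]; lia.
Qed.

Theorem proposition5p1 :
  (forall Phi : form -> Prop,
     (forall f, KPlus Phi f <-> LogR f) -> infinitely_many_vars Phi)
  /\ ~ finitely_axiomatizable LogR.
Proof.
  assert (Hinf : forall Phi : form -> Prop,
            (forall f, KPlus Phi f <-> LogR f) -> infinitely_many_vars Phi).
  { intros Phi HPhi [N HN]; set (k := S (2 ^ N)).
    assert (Hsound : forall f,
               KPlus Phi f -> valid_on (diff_rel k) (fun w => (w < k)%nat) f).
    { apply KPlus_sound_on; [intros u v _ [_ Hv]; exact Hv|].
      intros f Hf; apply (LogR_valid_on_diff N); [lia | apply HPhi, KP_ax, Hf|].
      intros n Hn; apply HN; exists f; auto. }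
    apply (theta_refuted k 0), Hsound; [apply HPhi, theta_valid | lia]. }
  split; [exact Hinf|].
  intros [l Hl]; apply (Hinf _ Hl).
  destruct (list_vars_bounded l) as [N HN]; exists N.
  intros n [f [Hf Hn]]; exact (HN f n Hf Hn).
Qed.
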